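(* If $G$ is a minimally $1/2$-tough claw-free graph, then for every edge $e$ of $G$ there exists a witness set $S=S(e)\subseteq V(G)$ for $e$ (in the sense defined in the context, with $t=1/2$) such that $|S|\le 1$.
   Context: All graphs are finite, simple and undirected. A graph is claw-free if it contains no induced subgraph isomorphic to $K_{1,3}$. $\omega(H)$ denotes the number of components of $H$. A cutset of $G$ is a vertex set $S$ with $G-S$ disconnected. For positive real $t$, $G$ is $t$-tough if $\omega(G-S)\le |S|/t$ for every cutset $S$; the toughness $\tau(G)$ is the largest such $t$, with $\tau(K_n)=\infty$ for all $n\ge1$. $G$ is minimally $t$-tough if $\tau(G)=t$ and $\tau(G-e)<t$ for every edge $e$. For a minimally $t$-tough graph $G$ and an edge $e$, a witness set for $e$ is a set $S\subseteq V(G)$ such that either $e$ is a bridge of $G$ and $S=\emptyset$, or $e$ is not a bridge of $G$, $\omega(G-S)\le |S|/t$, $\omega((G-e)-S)>|S|/t$, and $e$ is a bridge in $G-S$. *)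

(* Simple graphs as symmetric irreflexive relations on a finType. *)
From mathcomp Require Import all_boot all_order all_algebra.
Set Implicit Arguments. Unset Strict Implicit. Unset Printing Implicit Defensive.
Import Order.TTheory GRing.Theory Num.Theory.
Local Open Scope ring_scope.

Section Graphs.
Variable T : finType.
Implicit Types (g : rel T) (A S : {set T}) (u v : T).

Definition restr g A : rel T := [rel x y | [&& g x y, x \in A & y \in A]].

Definition ncomp g A : nat :=
  #|[set [set y in A | connect (restr g A) x y] | x in A]|.

Definition del_edge g u v : rel T :=
  [rel x y | g x y && ~~ (((x == u) && (y == v)) || ((x == v) && (y == u)))].

Definition cutset g S : Prop := (1 < ncomp g (~: S))%N.

Definition tough g (t : rat) : Prop :=
  forall S, cutset g S -> (ncomp g (~: S))%:R <= (#|S|)%:R / t.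

(* toughness value: None stands for +infinity *)
Definition is_toughness g (x : option rat) : Prop :=
  match x with
  | None => forall t : rat, 0 < t -> tough g t
  | Some x =>
      if x == 0 then (forall t : rat, 0 < t -> ~ tough g t)
      else [/\ 0 < x, tough g x & forall t : rat, 0 < t -> tough g t -> t <= x]
  end.

Definition minimally_tough g (t : rat) : Prop :=
  is_toughness g (Some t) /\
  forall u v, g u v ->
    exists x : rat, is_toughness (del_edge g u v) (Some x) /\ x < t.

Definition bridge_in g A u v : Prop :=
  [/\ g u v, u \in A, v \in A & (ncomp g A < ncomp (del_edge g u v) A)%N].

Definition bridge g u v : Prop := bridge_in g [set: T] u v.

Definition witness_set g (t : rat) u v S : Prop :=
  (bridge g u v /\ S = set0) \/
  [/\ ~ bridge g u v,
      (ncomp g (~: S))%:R <= (#|S|)%:R / t,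
      (#|S|)%:R / t < (ncomp (del_edge g u v) (~: S))%:R
    & bridge_in g (~: S) u v].

Definition claw_free g : Prop :=
  forall x a b c, g x a -> g x b -> g x c ->
    a != b -> a != c -> b != c ->
    ~~ g a b -> ~~ g a c -> ~~ g b c -> False.

End Graphs.

(* Let [S] witness that [G - uv] is not 1/2-tough, i.e. [2|S| < ω(G - uv - S)].
   Deleting an edge creates at most one new component, and does nothing unless
   both ends survive, so the 1/2-toughness of [G] gives [ω(G - S) = 2|S|] with
   [u, v] outside [S]; and if [S] is empty, [uv] is a bridge of [G].
   In a connected claw-free graph [ω(G - S) = 2|S|] is impossible for [|S| >= 2]:
   each vertex of [S] sees at most two components of [G - S] and each component
   sees a vertex of [S], so by double counting each vertex of [S] sees exactly two
   components and each component exactly one vertex of [S].  Connectivity then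
   yields an edge [s s2] inside [S], and [s] with a neighbour in each of its two
   components and [s2] is a claw. *)

From mathcomp Require Import all_boot all_order all_algebra.
Set Implicit Arguments. Unset Strict Implicit. Unset Printing Implicit Defensive.

Section Components.
Variables (T : finType) (g : rel T).
Hypothesis gsym : symmetric g.
Implicit Types (A C X : {set T}) (s x y : T).

Definition component A x := [set y in A | connect (restr g A) x y].

Definition components A := [set component A x | x in A].

Definition connected := (ncomp g setT <= 1)%N.

Definition adjacent s C := [exists y in C, g s y].

Lemma ncompE A : ncomp g A = #|components A|.
Proof. by []. Qed.

Lemma connect_restr_sym A : connect_sym (restr g A).
Proof.
by apply: sym_connect_sym => x y; rewrite /restr /= gsym [(x \in A) && _]andbC.
Qed.

Lemma component_eq A x y :
  connect (restr g A) x y -> component A x = component A y.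
Proof.
by move=> cxy; apply/setP => z; rewrite !inE (same_connect (connect_restr_sym A) cxy).
Qed.

Lemma mem_component A x : x \in A -> x \in component A x.
Proof. by move=> xA; rewrite inE xA connect0. Qed.

Lemma component_edge A x y :
  x \in A -> y \in A -> g x y -> component A x = component A y.
Proof. by move=> xA yA gxy; apply/component_eq/connect1; rewrite /restr /= gxy xA yA. Qed.

Lemma components_mem A C y : C \in components A -> y \in C -> C = component A y.
Proof.
case/imsetP=> x _ -> /[!inE] /andP[_ cxy].
exact: component_eq.
Qed.

Lemma components_sub A C y : C \in components A -> y \in C -> y \in A.
Proof. by case/imsetP=> x _ -> /[!inE] /andP[]. Qed.

Lemma components_nonadj A C1 C2 x y :
    C1 \in components A -> C2 \in components A -> C1 != C2 ->
  x \in C1 -> y \in C2 -> x != y /\ ~~ g x y.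
Proof.
move=> C1A C2A + xC1 yC2.
rewrite (components_mem C1A xC1) (components_mem C2A yC2) => neqC.
split; apply: contraNN neqC; first by move/eqP->.
by move=> gxy; rewrite (component_edge (components_sub C1A xC1) (components_sub C2A yC2) gxy).
Qed.

Lemma connected_closed X x y : connected ->
  (forall a b, a \in X -> g a b -> b \in X) -> x \in X -> y \in X.
Proof.
move=> /card_le1_eqP conn closedX xX.
have : y \in component setT x.
  by rewrite (conn (component setT y) (component setT x)) ?mem_component ?imset_f.
rewrite inE => /andP[_ /connectP[p xp ->]] {y}.
elim: p x xp xX => [|z p IHp] x //= /andP[/andP[gxz _] zp] xX.
exact: IHp zp (closedX x z xX gxz).
Qed.

Lemma adjacent_components_le2 A s :
  claw_free g -> (#|[set C in components A | adjacent s C]| <= 2)%N.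
Proof.
move=> clawF; rewrite leqNgt; apply/negP.
case/card_gt2P=> [C1 [C2 [C3 [[]]]]] /[!inE].
move=> /andP[C1A /exists_inP[y1 y1C gy1]] /andP[C2A /exists_inP[y2 y2C gy2]].
move=> /andP[C3A /exists_inP[y3 y3C gy3]] [n12 n23 n31].
have [d12 e12] := components_nonadj C1A C2A n12 y1C y2C.
have [d23 e23] := components_nonadj C2A C3A n23 y2C y3C.
have n13 : C1 != C3 by rewrite eq_sym.
have [d13 e13] := components_nonadj C1A C3A n13 y1C y3C.
exact: clawF gy1 gy2 gy3 d12 d13 d23 e12 e13 e23.
Qed.

Lemma connected_adjacent_component A C s0 : connected ->
  C \in components A -> s0 \notin A -> exists2 s, s \notin A & adjacent s C.
Proof.
move=> conn CA s0A.
have [/exists_inP[s /[!inE] sA adjs]|none] := boolP [exists s in ~: A, adjacent s C].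
  by exists s.
have [x xA Cx] := imsetP CA.
have xC : x \in C by rewrite Cx mem_component.
suff /(components_sub CA) s0A' : s0 \in C by rewrite s0A' in s0A.
apply: connected_closed conn _ xC => a b aC gab.
have [bA|bA] := boolP (b \in A).
  rewrite (components_mem CA aC) (component_edge (components_sub CA aC) bA gab).
  exact: mem_component.
case/negP: none; apply/exists_inP; exists b; rewrite ?inE //.
by apply/exists_inP; exists a; rewrite // gsym.
Qed.

End Components.

Section EdgeDeletion.
Variables (T : finType) (g : rel T) (u v : T).
Hypothesis gsym : symmetric g.
Local Notation h := (del_edge g u v).
Implicit Types (A : {set T}) (x y : T).

Lemma del_edge_sym : symmetric h.
Proof.
move=> x y; rewrite /del_edge /= gsym.
by rewrite [in RHS]orbC (andbC (y == u)) (andbC (y == v)).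
Qed.

Lemma connect_del_edge A x y : connect (restr g A) x y ->
  [|| connect (restr h A) x y, connect (restr h A) x u | connect (restr h A) x v].
Proof.
move=> /connectP[p xp ->] {y}; elim: p x xp => [|z p IHp] x /=; first by rewrite connect0.
case/andP=> gxz /IHp; have [hxz|] := boolP (restr h A x z).
  by case/or3P=> czy; apply/or3P; [constructor 1|constructor 2|constructor 3];
    apply: connect_trans (connect1 hxz) czy.
move: gxz; rewrite /restr /del_edge /= => /and3P[-> -> ->] /=; rewrite !andbT negbK.
by case/orP=> /andP[/eqP-> _] _; rewrite connect0 ?orbT.
Qed.

Lemma del_edge_component_eq A x y : connect (restr g A) x y ->
    component h A x != component h A u -> component h A y != component h A u ->
  component h A x = component h A y.
Proof.
have hsym := del_edge_sym.
move=> cxy Fxu Fyu; have cyx : connect (restr g A) y x by rewrite connect_restr_sym.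
case/or3P: (connect_del_edge cxy) => [/(component_eq hsym)//|/(component_eq hsym) Exu|cxv].
  by rewrite Exu eqxx in Fxu.
case/or3P: (connect_del_edge cyx) => [/(component_eq hsym)//|/(component_eq hsym) Eyu|cyv].
  by rewrite Eyu eqxx in Fyu.
by rewrite (component_eq hsym cxv) (component_eq hsym cyv).
Qed.

Lemma ncomp_del_edge_le A : (ncomp h A <= (ncomp g A).+1)%N.
Proof.
set F := component h A; set G := component g A.
pose A' := [set x in A | F x != F u].
have sub_comp : [set F x | x in A] \subset F u |: [set F x | x in A'].
  apply/subsetP => _ /imsetP[x xA ->]; rewrite !inE.
  have [//|Fxu] := eqVneq (F x) (F u).
  by rewrite imset_f // inE xA Fxu.
pose phi (C : {set T}) := if [pick y in C] is Some y then G y else set0.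
have phiF x : x \in A -> phi (F x) = G x.
  move=> xA; rewrite /phi; case: pickP => [y|]; last by move/(_ x); rewrite mem_component.
  rewrite inE => /andP[_ cxy]; apply/esym/(component_eq gsym).
  apply: connect_sub cxy => a b /andP[/andP[gab _] abA].
  by apply: connect1; rewrite /restr /= gab.
have phi_inj : {in [set F x | x in A'] &, injective phi}.
  move=> _ _ /imsetP[x /[!inE] /andP[xA Fxu] ->] /imsetP[y /[!inE] /andP[yA Fyu] ->].
  rewrite !phiF // => Gxy; apply: del_edge_component_eq Fxu Fyu.
  have : y \in G x by rewrite Gxy mem_component.
  by rewrite inE => /andP[].
rewrite !ncompE -add1n; apply: leq_trans (subset_leq_card sub_comp) _.
rewrite cardsU1 leq_add ?leq_b1 // -(card_in_imset phi_inj).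
apply/subset_leq_card/subsetP => _ /imsetP[_ /imsetP[x /[!inE] /andP[xA _] ->] ->].
by rewrite phiF ?imset_f.
Qed.

Lemma ncomp_del_edge_out A :
  (u \notin A) || (v \notin A) -> ncomp h A = ncomp g A.
Proof.
move=> uv_out; have eq_restr : restr h A =2 restr g A.
  move=> x y; rewrite /restr /del_edge /=.
  have [xA|_] := boolP (x \in A); have [yA|_] := boolP (y \in A); rewrite ?andbF //.
  rewrite !andbT; case: (g x y) => //=.
  by apply: contraL uv_out => /orP[] /andP[/eqP<- /eqP<-]; rewrite negb_or xA yA.
have eq_comp : component h A =1 component g A.
  by move=> x; apply/setP => y; rewrite !inE (eq_connect eq_restr).
by rewrite !ncompE /components (eq_imset _ eq_comp).
Qed.

End EdgeDeletion.

Lemma eq_of_sum_leq (I : finType) (P : pred I) (E1 E2 : I -> nat) :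
    (forall i, P i -> E1 i <= E2 i)%N ->
    (\sum_(i | P i) E2 i <= \sum_(i | P i) E1 i)%N ->
  forall i, P i -> E1 i = E2 i.
Proof.
move=> leE12; rewrite (geq_leqif (leqif_sum (fun i Pi => leqif_eq (leE12 i Pi)))).
by move=> /forall_inP eqE12 i /eqE12/eqP.
Qed.

Lemma card_set_sum (I : finType) (B : {set I}) (p : pred I) :
  #|[set x in B | p x]| = \sum_(x in B) p x.
Proof. by rewrite -sum1dep_card big_mkcondr /=; apply: eq_bigr => x _; case: (p x). Qed.

Lemma sum_card_rel (I J : finType) (A : {set I}) (B : {set J}) (r : I -> J -> bool) :
  \sum_(x in A) #|[set y in B | r x y]| = \sum_(y in B) #|[set x in A | r x y]|.
Proof.
under eq_bigr do rewrite card_set_sum.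
by rewrite exchange_big; apply: eq_bigr => y _; rewrite card_set_sum.
Qed.

Section ClawFreeCuts.
Variables (T : finType) (g : rel T).
Hypotheses (gsym : symmetric g) (girr : irreflexive g) (clawF : claw_free g).
Hypothesis conn : connected g.

Lemma cut_neighbor S s s' :
    (forall C, C \in components g (~: S) -> #|[set s in S | adjacent g s C]| <= 1)%N ->
    s \in S -> s' \in S -> s != s' ->
  exists2 s2, s2 \in S & g s s2.
Proof.
move=> adj_le1 sS s'S ss'.
have [/exists_inP[s2 s2S gss2]|none] := boolP [exists s2 in S, g s s2]; first by exists s2.
(* Otherwise [s] and the components it sees form a set closed under edges. *)
pose X := s |: [set y in ~: S | adjacent g s (component g (~: S) y)].
suff : s' \in X by rewrite !inE eq_sym (negbTE ss') s'S.
apply: connected_closed conn _ (setU11 s _) => a b /setU1P[->|aX] gab.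
  have [bS|bS] := boolP (b \in S); first by case/negP: none; apply/exists_inP; exists b.
  rewrite !inE bS /=; apply/orP; right.
  by apply/exists_inP; exists b; rewrite ?mem_component ?inE.
move: aX; rewrite inE => /andP[aS adj_a].
have [bS|bS] := boolP (b \in S).
  suff -> : b = s by rewrite setU11.
  have adj_b : adjacent g b (component g (~: S) a).
    by apply/exists_inP; exists a; rewrite ?mem_component // gsym.
  have /card_le1_eqP all_eq := adj_le1 _ (imset_f (component g (~: S)) aS).
  by apply: all_eq; rewrite inE ?sS ?bS.
have bS' : b \in ~: S by rewrite inE.
by rewrite !inE bS /= -(component_edge gsym aS bS' gab) adj_a orbT.
Qed.

Lemma ncomp_ge_adjacency (S : {set T}) :
    (0 < #|S|)%N -> (2 * #|S| <= ncomp g (~: S))%N ->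
  (forall C, C \in components g (~: S) -> #|[set s in S | adjacent g s C]| = 1) /\
  (forall s, s \in S -> #|[set C in components g (~: S) | adjacent g s C]| = 2).
Proof.
move=> /card_gt0P[s0 s0S] ncomp_ge; set comps := components g (~: S).
pose nS s := #|[set C in comps | adjacent g s C]|.
pose nC C := #|[set s in S | adjacent g s C]|.
have nC_gt0 C : C \in comps -> (0 < nC C)%N.
  move=> Ccomps; have s0S' : s0 \notin ~: S by rewrite inE s0S.
  have [s /[!inE] /negPn sS adjs] := connected_adjacent_component gsym conn Ccomps s0S'.
  by apply/card_gt0P; exists s; rewrite inE sS.
have double : \sum_(s in S) nS s = \sum_(C in comps) nC C := sum_card_rel S comps _.
have nS_le2 s : s \in S -> (nS s <= 2)%N by move=> _; apply: adjacent_components_le2.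
have sum_nS : (\sum_(s in S) nS s <= 2 * #|S|)%N.
  by rewrite mulnC -sum_nat_const; apply: leq_sum.
split=> [C Ccomps | s sS].
  apply/esym/(eq_of_sum_leq nC_gt0 _ Ccomps).
  by rewrite -double sum1_card (leq_trans sum_nS).
apply: (eq_of_sum_leq nS_le2 _ sS).
rewrite sum_nat_const mulnC double (leq_trans ncomp_ge) // ncompE -sum1_card.
exact: leq_sum.
Qed.

Lemma claw_free_ncomp_lt (S : {set T}) : (1 < #|S|)%N -> (ncomp g (~: S) < 2 * #|S|)%N.
Proof.
move=> S_gt1; rewrite ltnNge; apply/negP => ncomp_ge.
set comps := components g (~: S).
have [nC1 nS2] := ncomp_ge_adjacency (ltnW S_gt1) ncomp_ge.
have adj_unique C s s' : C \in comps -> s \in S -> s' \in S ->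
    adjacent g s C -> adjacent g s' C -> s = s'.
  move=> /nC1/eq_leq/card_le1_eqP all_eq sS s'S adjs adjs'.
  by apply: all_eq; rewrite inE ?sS ?s'S.
case/card_gt1P: S_gt1 => s [s' [sS s'S ss']].
have [s2 s2S gss2] : exists2 s2, s2 \in S & g s s2.
  by apply: cut_neighbor sS s'S ss' => C /nC1/eq_leq.
have /card_gt1P : (1 < #|[set C in comps | adjacent g s C]|)%N by rewrite nS2.
case=> C1 [C2 [/[!inE] /andP[C1comps /exists_inP[y1 y1C gy1]]]].
case/andP=> C2comps /exists_inP[y2 y2C gy2] n12.
have [d12 e12] := components_nonadj gsym C1comps C2comps n12 y1C y2C.
have far_s2 C y : C \in comps -> y \in C -> g s y -> y != s2 /\ ~~ g y s2.
  move=> Ccomps yC gsy; have yS := components_sub Ccomps yC.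
  split; first by apply: contraTneq yS => ->; rewrite inE s2S.
  apply/negP => gys2; suff ss2 : s = s2 by rewrite -ss2 girr in gss2.
  by apply: (adj_unique C) => //; apply/exists_inP; exists y; rewrite // gsym.
have [d1 e1] := far_s2 C1 y1 C1comps y1C gy1.
have [d2 e2] := far_s2 C2 y2 C2comps y2C gy2.
exact: clawF gy1 gy2 gss2 d12 d1 d2 e12 e1 e2.
Qed.

End ClawFreeCuts.

Import Order.TTheory GRing.Theory Num.Theory.
Local Open Scope ring_scope.

Lemma natr_div_half (n : nat) : (n%:R : rat) / (1 / 2) = (2 * n)%N%:R.
Proof. by rewrite div1r invrK natrM mulrC. Qed.

Section Toughness.
Variables (T : finType) (g : rel T).

Lemma is_toughness_tough t : is_toughness g (Some t) -> t != 0 -> tough g t.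
Proof. by rewrite /is_toughness => + /negbTE t_neq0; rewrite t_neq0 => -[]. Qed.

Lemma is_toughness_not_tough x t :
  is_toughness g (Some x) -> x < t -> 0 < t -> ~ tough g t.
Proof.
rewrite /is_toughness; case: eqP => [_ not_tough _ t_gt0|_ [_ _ max_x] lt_xt t_gt0].
  exact: not_tough.
by move/(max_x t t_gt0); rewrite leNgt lt_xt.
Qed.

Lemma tough_connected t : tough g t -> connected g.
Proof.
move=> tough_g; rewrite /connected leqNgt; apply/negP => disconn.
have := tough_g set0; rewrite /cutset setC0 => /(_ disconn).
by rewrite cards0 mul0r lern0 => /eqP ncomp0; rewrite ncomp0 in disconn.
Qed.

Lemma tough_half_ncomp_le (S : {set T}) :
  tough g (1 / 2) -> (0 < #|S|)%N -> (ncomp g (~: S) <= 2 * #|S|)%N.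
Proof.
move=> tough_g S_gt0; have [cutS|] := ltnP 1 (ncomp g (~: S)).
  by rewrite -(ler_nat rat) -natr_div_half; apply: tough_g.
by move/leq_trans; apply; rewrite muln_gt0.
Qed.

Lemma not_tough_half : ~ tough g (1 / 2) ->
  exists2 S, cutset g S & (2 * #|S| < ncomp g (~: S))%N.
Proof.
move=> not_tough; have [/existsP[S /andP[cutS ltS]]|none] :=
  boolP [exists S : {set T}, (1 < ncomp g (~: S))%N && (2 * #|S| < ncomp g (~: S))%N].
  by exists S.
case: not_tough => S cutS; rewrite natr_div_half ler_nat leqNgt.
by apply: contraNN none => ltS; apply/existsP; exists S; rewrite cutS.
Qed.

End Toughness.

Theorem mainTheorem9 (T : finType) (g : rel T) :
  symmetric g -> irreflexive g -> claw_free g ->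
  minimally_tough g (1 / 2) ->
  forall u v : T, g u v ->
    exists S : {set T}, witness_set g (1 / 2) u v S /\ (#|S| <= 1)%N.
Proof.
move=> gsym girr clawF [toughness_g min_g] u v guv.
have tough_g := is_toughness_tough toughness_g isT.
have conn := tough_connected tough_g.
have [x [toughness_ge lt_x]] := min_g u v guv.
have [S cutS ltS] := not_tough_half (is_toughness_not_tough toughness_ge lt_x isT).
have [br|nbr] := ltnP (ncomp g setT) (ncomp (del_edge g u v) setT).
  by exists set0; split; [left; split | rewrite cards0].
have S_gt0 : (0 < #|S|)%N.
  rewrite card_gt0; apply: contraTneq cutS => ->.
  by rewrite /cutset setC0 -leqNgt (leq_trans nbr conn).
have le_S := tough_half_ncomp_le tough_g S_gt0.
have /andP[uS vS] : (u \in ~: S) && (v \in ~: S).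
  by apply: contraLR ltS; rewrite negb_and -leqNgt => /ncomp_del_edge_out->.
have ge_S : (2 * #|S| <= ncomp g (~: S))%N.
  by rewrite -ltnS; apply: leq_trans ltS (ncomp_del_edge_le _ _ gsym _).
have S_le1 : (#|S| <= 1)%N.
  rewrite leqNgt; apply: contraL ge_S => /(claw_free_ncomp_lt gsym girr clawF conn).
  by rewrite -ltnNge.
exists S; split => //; right; split.
- by case=> _ _ _; rewrite ltnNge nbr.
- by rewrite natr_div_half ler_nat.
- by rewrite natr_div_half ltr_nat.
- by split => //; apply: leq_ltn_trans le_S ltS.
Qed.
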